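(* There exists a countable family $\mathcal{F}$ of $1$-Lipschitz functions $2^\omega\to 2^\omega$ and an uncountable set $X\subseteq 2^\omega$ such that $X\times X$ is covered by $\mathcal{F}$.
   Context: $2^\omega$ is the Cantor set of all functions $\omega\to\{0,1\}$, equipped with the metric $d(x,y)=2^{-k}$ for $x\neq y$, where $k$ is the smallest natural number with $x\restriction k\neq y\restriction k$ (and $d(x,x)=0$). A function $f$ is $1$-Lipschitz if $d(f(x),f(y))\le d(x,y)$ for all $x,y$. A set $M\subseteq 2^\omega\times 2^\omega$ is covered by a family of functions $\mathcal{F}$ if for every $(x,y)\in M$ there is $f\in\mathcal{F}$ such that either $y=f(x)$ or $x=f(y)$. *)

From Stdlib Require Import Reals ClassicalEpsilon.
Open Scope R_scope.

Definition cantor := nat -> bool.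

Definition first_diff (x y : cantor) (n : nat) : Prop :=
  x n <> y n /\ forall m, (m < n)%nat -> x m = y m.

(* The metric: d(x,x) = 0, and for x <> y, d(x,y) = 2^{-k} where k is the
   smallest k with x|k <> y|k; that k equals (first differing index) + 1. *)
Definition cantor_dist (x y : cantor) : R :=
  match excluded_middle_informative (exists n, first_diff x y n) with
  | left H => / 2 ^ (S (proj1_sig (constructive_indefinite_description _ H)))
  | right _ => 0
  end.

Definition lipschitz1 (f : cantor -> cantor) : Prop :=
  forall x y, cantor_dist (f x) (f y) <= cantor_dist x y.

Definition covered_by {I : Type} (F : I -> cantor -> cantor)
  (M : cantor -> cantor -> Prop) : Prop :=
  forall x y, M x y -> exists i, y = F i x \/ x = F i y.

Definition countable_set (X : cantor -> Prop) : Prop :=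
  exists g : nat -> cantor, forall x, X x -> exists n, g n = x.

(* A linear order on a co-infinite set S of naturals is coded by a point of 2^omega whose
   m-th block records whether m is in S and, in unary, the rank of m: the number of earlier
   members of S preceding m in the order (or all earlier members, if m is not in S).
   If y is, after renaming finitely many points, an initial segment of x, then beyond some
   block the code of y is computed from the code of x block by block, each output bit
   depending only on input bits at earlier or equal positions. Such a decoder is
   1-Lipschitz, and it is determined by finitely much data, so countably many decoders
   cover the codes of any chain of orders. A countable chain has an upper bound (its direct
   limit followed by new top points) whose code diagonalises against all codes in the chain;
   hence a maximal chain with injective coding, which exists by the Bourbaki-Witt tower
   argument, has uncountably many codes. *)

From Stdlib Require Import Reals ClassicalEpsilon Lia Lra Arith List Cantor.
From Stdlib Require Import FunctionalExtensionality PropExtensionality Classical.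
Open Scope nat_scope.
Open Scope bool_scope.

Definition decide (P : Prop) : bool :=
  if excluded_middle_informative P then true else false.

Lemma decideP (P : Prop) : reflect P (decide P).
Proof. unfold decide; destruct (excluded_middle_informative P); constructor; auto. Qed.

Definition count_below (P : nat -> Prop) (m : nat) : nat :=
  length (filter (fun b => decide (P b)) (seq 0 m)).

Lemma in_count_below (P : nat -> Prop) m b :
  In b (filter (fun b => decide (P b)) (seq 0 m)) <-> b < m /\ P b.
Proof.
  rewrite filter_In, in_seq.
  destruct (decideP (P b)); split; intuition (try discriminate); lia.
Qed.

Lemma count_below_S (P : nat -> Prop) m :
  count_below P (S m) = count_below P m + (if decide (P m) then 1 else 0).
Proof.
  unfold count_below. rewrite seq_S, filter_app, length_app. simpl.
  now destruct (decide (P m)).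
Qed.

Lemma count_below_le (P : nat -> Prop) m : count_below P m <= m.
Proof.
  unfold count_below. rewrite <- (length_seq m 0) at 2.
  apply NoDup_incl_length; [apply NoDup_filter, seq_NoDup|].
  intros b Hb. apply filter_In in Hb. tauto.
Qed.

Lemma count_below_mono (P Q : nat -> Prop) m :
  (forall b, b < m -> P b -> Q b) -> count_below P m <= count_below Q m.
Proof.
  intros HPQ. apply NoDup_incl_length; [apply NoDup_filter, seq_NoDup|].
  intros b Hb. apply in_count_below in Hb. apply in_count_below. firstorder.
Qed.

Lemma count_below_ext (P Q : nat -> Prop) m :
  (forall b, b < m -> (P b <-> Q b)) -> count_below P m = count_below Q m.
Proof.
  intros HPQ. apply Nat.le_antisymm; apply count_below_mono; firstorder.
Qed.

Lemma count_below_lt (P Q : nat -> Prop) m c :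
  (forall b, b < m -> P b -> Q b) -> c < m -> Q c -> ~ P c ->
  count_below P m < count_below Q m.
Proof.
  intros HPQ Hc HQ HP. apply (NoDup_incl_length (l := c :: _)).
  - constructor; [rewrite in_count_below; tauto|apply NoDup_filter, seq_NoDup].
  - intros b [<-|Hb]; apply in_count_below; [tauto|].
    apply in_count_below in Hb. firstorder.
Qed.

Lemma count_below_bij (P Q : nat -> Prop) (f : nat -> nat) m :
  (forall a, a < m -> P a -> f a < m /\ Q (f a)) ->
  (forall a1 a2, a1 < m -> a2 < m -> P a1 -> P a2 -> f a1 = f a2 -> a1 = a2) ->
  (forall b, b < m -> Q b -> exists a, a < m /\ P a /\ f a = b) ->
  count_below P m = count_below Q m.
Proof.
  intros Hinto Hinj Honto. unfold count_below.
  rewrite <- (length_map f). apply Nat.le_antisymm.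
  - apply NoDup_incl_length.
    + apply NoDup_map_NoDup_ForallPairs; [|apply NoDup_filter, seq_NoDup].
      intros a1 a2 H1 H2. apply in_count_below in H1, H2. apply Hinj; tauto.
    + intros b Hb. apply in_map_iff in Hb as [a [<- Ha]].
      apply in_count_below in Ha. apply in_count_below, Hinto; tauto.
  - apply NoDup_incl_length; [apply NoDup_filter, seq_NoDup|].
    intros b Hb. apply in_count_below in Hb as [Hb HQ].
    destruct (Honto b Hb HQ) as [a [Ha [HPa <-]]].
    apply in_map, in_count_below. auto.
Qed.

Lemma count_below_lt_bound r m : count_below (fun k => k < r) m = Nat.min r m.
Proof.
  induction m as [|m IH]; [now rewrite Nat.min_0_r|].
  rewrite count_below_S, IH. destruct (decideP (m < r)); lia.
Qed.

Fixpoint tri (m : nat) : nat := match m with 0 => 0 | S m' => tri m' + S m' end.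

Definition block_pos (m k : nat) : nat := tri m + k.

Definition block_of (p : nat) : nat * nat := let (a, k) := Cantor.of_nat p in (k + a, k).

Lemma tri_mono m m' : m <= m' -> tri m <= tri m'.
Proof. induction 1; simpl; lia. Qed.

Lemma block_pos_lt_tri m k : k <= m -> block_pos m k < tri (S m).
Proof. unfold block_pos; simpl; lia. Qed.

Lemma block_pos_cantor m k : k <= m -> block_pos m k = Cantor.to_nat (m - k, k).
Proof.
  intros Hk. cbn. replace (k + (m - k)) with m by lia.
  unfold block_pos. rewrite Nat.add_comm. f_equal. clear Hk.
  induction m as [|m IH]; [reflexivity|]. simpl. rewrite IH; lia.
Qed.

Lemma block_of_pos m k : k <= m -> block_of (block_pos m k) = (m, k).
Proof.
  intros Hk. unfold block_of. rewrite block_pos_cantor, Cantor.cancel_of_to by exact Hk.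
  f_equal; lia.
Qed.

Lemma block_of_inv p m k : block_of p = (m, k) -> k <= m /\ block_pos m k = p.
Proof.
  unfold block_of. destruct (Cantor.of_nat p) as [a k'] eqn:E. intros [= <- <-].
  split; [lia|]. rewrite block_pos_cantor by lia.
  replace (k' + a - k') with a by lia. rewrite <- E. apply Cantor.cancel_to_of.
Qed.

Fixpoint prefix_code (z : cantor) (M : nat) : nat :=
  match M with 0 => 0 | S M' => 2 * prefix_code (fun p => z (S p)) M' + Nat.b2n (z 0) end.

Lemma testbit_prefix_code M : forall z p, p < M -> Nat.testbit (prefix_code z M) p = z p.
Proof.
  induction M as [|M IH]; intros z p Hp; [lia|].
  destruct p as [|p]; cbn [prefix_code].
  - apply Nat.testbit_0_r.
  - rewrite Nat.testbit_succ_r. apply (IH (fun q => z (S q))). lia.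
Qed.

Lemma first_diff_unique x y n1 n2 : first_diff x y n1 -> first_diff x y n2 -> n1 = n2.
Proof.
  intros [H1 H1'] [H2 H2'].
  destruct (Nat.lt_trichotomy n1 n2) as [Hl|[?|Hl]]; auto.
  - exfalso; apply H1, H2'; auto.
  - exfalso; apply H2, H1'; auto.
Qed.

Lemma first_diff_le x y M :
  (exists q, q <= M /\ x q <> y q) -> exists n, n <= M /\ first_diff x y n.
Proof.
  induction M as [|M IH]; intros [q [Hq Hxy]].
  - exists 0. replace q with 0 in Hxy by lia. repeat split; auto. lia.
  - destruct (classic (exists q, q <= M /\ x q <> y q)) as [Hq'|Hq'].
    + destruct (IH Hq') as [n [? ?]]. exists n; split; auto.
    + exists (S M). split; [lia|split].
      * destruct (Nat.eq_dec q (S M)) as [->|]; auto.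
        exfalso; apply Hq'; exists q; split; auto; lia.
      * intros m Hm. apply NNPP. intros Hne. apply Hq'. exists m; split; auto; lia.
Qed.

Lemma cantor_dist_first_diff x y n : first_diff x y n -> cantor_dist x y = (/ 2 ^ (S n))%R.
Proof.
  intros H. unfold cantor_dist.
  destruct (excluded_middle_informative (exists n, first_diff x y n)) as [E|E].
  - destruct (constructive_indefinite_description _ E) as [n' Hn']; simpl.
    now rewrite (first_diff_unique _ _ _ _ Hn' H).
  - exfalso; eauto.
Qed.

Lemma cantor_dist_nonneg x y : (0 <= cantor_dist x y)%R.
Proof.
  unfold cantor_dist. destruct (excluded_middle_informative _); [|lra].
  left. apply Rinv_0_lt_compat, pow_lt. lra.
Qed.

Lemma lipschitz1_of_causal (f : cantor -> cantor) :
  (forall z z' p, (forall q, q <= p -> z q = z' q) -> f z p = f z' p) -> lipschitz1 f.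
Proof.
  intros Hf x y.
  destruct (classic (exists n, first_diff (f x) (f y) n)) as [[n1 Hn1]|Hn].
  - rewrite (cantor_dist_first_diff _ _ _ Hn1).
    assert (Hq : exists q, q <= n1 /\ x q <> y q).
    { apply NNPP; intros Hc. apply (proj1 Hn1), Hf. intros q Hq.
      apply NNPP. intros Hne. apply Hc. eauto. }
    destruct (first_diff_le _ _ _ Hq) as [n0 [Hle Hn0]].
    rewrite (cantor_dist_first_diff _ _ _ Hn0).
    apply Rinv_le_contravar; [apply pow_lt; lra|apply Rle_pow; [lra|lia]].
  - unfold cantor_dist at 1.
    destruct (excluded_middle_informative _); [contradiction|apply cantor_dist_nonneg].
Qed.

(** * Linear orders on co-infinite sets and their initial segments *)

Record linord := {
  supp : nat -> Prop;
  prec : nat -> nat -> Prop;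
  prec_irrefl : forall a, ~ prec a a;
  prec_trans : forall a b c, prec a b -> prec b c -> prec a c;
  prec_total : forall a b, supp a -> supp b -> a <> b -> prec a b \/ prec b a;
  supp_coinfinite : forall a, exists b, a <= b /\ ~ supp b }.

Definition below_cut (x : linord) (c : option nat) (b : nat) : Prop :=
  match c with None => True | Some c => prec x b c end.

Definition cut_in_supp (x : linord) (c : option nat) : Prop :=
  match c with None => True | Some c => supp x c end.

(* [y] is, via [pi], the part of [x] below the cut [c] (all of [x] if [c = None]); the
   bound [n], beyond which [pi] moves nothing, makes the code of [y] computable from that
   of [x]. *)
Record init_seg_via (y x : linord) (c : option nat) (pi : nat -> nat) (n : nat) : Prop := {
  isv_cut : cut_in_supp x c;
  isv_into : forall a, supp y a -> supp x (pi a) /\ below_cut x c (pi a);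
  isv_inj : forall a1 a2, supp y a1 -> supp y a2 -> pi a1 = pi a2 -> a1 = a2;
  isv_onto : forall b, supp x b -> below_cut x c b -> exists a, supp y a /\ pi a = b;
  isv_prec : forall a1 a2, supp y a1 -> supp y a2 ->
    (prec y a1 a2 <-> prec x (pi a1) (pi a2));
  isv_fix : forall a, supp y a -> (n <= a \/ n <= pi a) -> pi a = a }.

Arguments isv_cut {y x c pi n}.
Arguments isv_into {y x c pi n}.
Arguments isv_inj {y x c pi n}.
Arguments isv_onto {y x c pi n}.
Arguments isv_prec {y x c pi n}.
Arguments isv_fix {y x c pi n}.

Definition init_seg (y x : linord) : Prop := exists c pi n, init_seg_via y x c pi n.

Lemma init_seg_refl X : init_seg X X.
Proof.
  exists None, (fun a => a), 0. split; simpl; try tauto.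
  intros b Hb _. exists b; auto.
Qed.

Lemma init_seg_trans y x w : init_seg y x -> init_seg x w -> init_seg y w.
Proof.
  intros [c1 [p1 [n1 H]]] [c2 [p2 [n2 G]]].
  exists (match c1 with None => c2 | Some c => Some (p2 c) end), (fun a => p2 (p1 a)), (max n1 n2).
  split.
  - destruct c1 as [c|]; simpl; [apply G.(isv_into), H.(isv_cut)|apply G.(isv_cut)].
  - intros a Ha. destruct (H.(isv_into) a Ha) as [Hx Hb].
    split; [apply G.(isv_into), Hx|].
    destruct c1 as [c|]; simpl in *; [|apply G.(isv_into), Hx].
    apply G.(isv_prec); auto. apply H.(isv_cut).
  - intros a1 a2 Ha1 Ha2 E. apply H.(isv_inj); auto.
    apply G.(isv_inj); auto; apply H.(isv_into); auto.
  - intros b Hb Hbel.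
    assert (exists a', supp x a' /\ p2 a' = b /\ below_cut x c1 a') as [a' [Ha' [<- Hbel']]].
    { destruct c1 as [c|]; simpl in *.
      - pose proof H.(isv_cut) as Hc. simpl in Hc.
        destruct (G.(isv_onto) b Hb) as [a' [Ha' <-]].
        + destruct c2 as [c2|]; simpl in *; auto.
          eapply prec_trans; [exact Hbel|]. apply G.(isv_into), Hc.
        + exists a'. repeat split; auto. apply (G.(isv_prec) a' c); auto.
      - destruct (G.(isv_onto) b Hb Hbel) as [a' [? ?]]. exists a'; auto. }
    destruct (H.(isv_onto) a' Ha' Hbel') as [a [? <-]]. eauto.
  - intros a1 a2 Ha1 Ha2.
    rewrite H.(isv_prec), G.(isv_prec) by (auto; apply H.(isv_into); auto). tauto.
  - intros a Ha Hn. destruct (H.(isv_into) a Ha) as [Hx _].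
    destruct Hn as [Hn|Hn].
    + rewrite (H.(isv_fix) a Ha) in * by lia. apply G.(isv_fix); auto; lia.
    + rewrite (G.(isv_fix) (p1 a) Hx) in * by lia. apply H.(isv_fix); auto; lia.
Qed.

(** * Codes and decoders *)

(* Block [m] occupies positions [block_pos m k], [k <= m]: the first [m] bits hold
   [rank X m] in unary, the last one the membership of [m]. *)
Definition rank (X : linord) (m : nat) : nat :=
  if decide (supp X m) then count_below (fun b => supp X b /\ prec X b m) m
  else count_below (supp X) m.

Definition encode (X : linord) : cantor := fun p =>
  let (m, k) := block_of p in
  if k <? m then k <? rank X m else decide (supp X m).

Lemma rank_le X m : rank X m <= m.
Proof. unfold rank; destruct (decide _); apply count_below_le. Qed.

Lemma encode_block_pos X m k : k <= m ->
  encode X (block_pos m k) = if k <? m then k <? rank X m else decide (supp X m).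
Proof. intros Hk. unfold encode. now rewrite block_of_pos. Qed.

Definition unary_value (z : cantor) (m : nat) : nat :=
  count_below (fun k => z (block_pos m k) = true) m.

Lemma unary_value_encode X m : unary_value (encode X) m = rank X m.
Proof.
  unfold unary_value. rewrite (count_below_ext _ (fun k => k < rank X m)).
  - rewrite count_below_lt_bound. pose proof (rank_le X m). lia.
  - intros k Hk. rewrite encode_block_pos by lia.
    destruct (Nat.ltb_spec k m); [|lia]. apply Nat.ltb_lt.
Qed.

Definition keeps (z : cantor) (m t : nat) : bool :=
  z (block_pos m m) && (unary_value z m <=? t).

Fixpoint seg_count (N h : nat) (z : cantor) (d : nat) : nat :=
  match d with
  | 0 => h
  | S d' => seg_count N h z d' + (if keeps z (S N + d') (seg_count N h z d') then 1 else 0)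
  end.

(* Blocks up to [N] are copied from the binary digits of [H]; beyond, [seg_count] keeps
   track of the number of points of the decoded order below the current block, starting
   from [h], and [keeps] decides membership from it. *)
Definition decoder (N h H : nat) (z : cantor) : cantor := fun p =>
  let (m, k) := block_of p in
  if m <=? N then Nat.testbit H p else
  let t := seg_count N h z (m - S N) in
  if k <? m then z p && (k <? t) else keeps z m t.

Lemma keeps_causal z z' m t :
  (forall q, q <= block_pos m m -> z q = z' q) -> keeps z m t = keeps z' m t.
Proof.
  intros H. unfold keeps, unary_value. rewrite H by lia.
  erewrite count_below_ext; [reflexivity|].
  intros k Hk. rewrite H; [tauto|unfold block_pos; lia].
Qed.

Lemma seg_count_causal N h z z' d :
  (forall q, q < tri (S N + d) -> z q = z' q) -> seg_count N h z d = seg_count N h z' d.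
Proof.
  induction d as [|d IH]; intros H; [reflexivity|].
  assert (Hm : block_pos (S N + d) (S N + d) < tri (S N + S d))
    by (rewrite Nat.add_succ_r; apply block_pos_lt_tri; lia).
  pose proof (tri_mono (S N + d) (S N + S d) ltac:(lia)).
  cbn [seg_count]. rewrite IH by (intros; apply H; lia).
  rewrite (keeps_causal z z') by (intros; apply H; lia). reflexivity.
Qed.

Lemma decoder_lipschitz N h H : lipschitz1 (decoder N h H).
Proof.
  apply lipschitz1_of_causal. intros z z' p Hzz. unfold decoder.
  destruct (block_of p) as [m k] eqn:E. destruct (block_of_inv _ _ _ E) as [Hk <-].
  destruct (Nat.leb_spec m N); [reflexivity|].
  rewrite (seg_count_causal N h z z').
  - destruct (Nat.ltb_spec k m).
    + rewrite Hzz; auto.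
    + assert (k = m) by lia. subst k. apply keeps_causal. intros q Hq. apply Hzz. lia.
  - intros q Hq. apply Hzz. replace (S N + (m - S N)) with m in Hq by lia.
    unfold block_pos. lia.
Qed.

Section InitSegCode.
Variables (y x : linord) (c : option nat) (pi : nat -> nat) (n : nat).
Hypothesis HR : init_seg_via y x c pi n.

Let seg b := supp x b /\ below_cut x c b.

Lemma count_below_init_seg (P Q : nat -> Prop) m : n <= m ->
  (forall a, supp y a -> (P a <-> Q (pi a))) ->
  count_below (fun a => supp y a /\ P a) m = count_below (fun b => seg b /\ Q b) m.
Proof.
  intros Hm HPQ. apply (count_below_bij _ _ pi).
  - intros a Ha [Hya HPa]. split; [|split; [apply HR.(isv_into); auto|apply HPQ; auto]].
    destruct (Nat.lt_ge_cases (pi a) m); auto.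
    rewrite HR.(isv_fix) in *; auto; lia.
  - intros a1 a2 _ _ [? _] [? _]. apply HR.(isv_inj); auto.
  - intros b Hb [[Hxb Hbel] HQ]. destruct (HR.(isv_onto) b Hxb Hbel) as [a [Ha <-]].
    exists a. split; [|split; [split; [auto|apply HPQ; auto]|auto]].
    destruct (Nat.lt_ge_cases a m); auto.
    rewrite HR.(isv_fix) in Hb; auto; lia.
Qed.

Lemma supp_init_seg m : n <= m -> (supp y m <-> seg m).
Proof.
  intros Hm. split.
  - intros Hy. rewrite <- (HR.(isv_fix) m Hy) by lia. apply HR.(isv_into), Hy.
  - intros [Hx Hb]. destruct (HR.(isv_onto) m Hx Hb) as [a [Ha E]].
    rewrite HR.(isv_fix) in E; [subst; auto|auto|lia].
Qed.

Lemma count_supp_init_seg m : n <= m -> count_below (supp y) m = count_below seg m.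
Proof.
  intros Hm.
  rewrite (count_below_ext (supp y) (fun a => supp y a /\ True)) by tauto.
  rewrite (count_below_init_seg (fun _ => True) (fun _ => True)) by tauto.
  apply count_below_ext; tauto.
Qed.

Lemma rank_init_seg_member m : n <= m -> supp y m ->
  rank y m = rank x m /\ rank x m <= count_below seg m.
Proof.
  intros Hm Hy. destruct (proj1 (supp_init_seg m Hm) Hy) as [Hx Hb].
  assert (Hx_rank : rank x m = count_below (fun b => seg b /\ prec x b m) m).
  { unfold rank. destruct (decideP (supp x m)); [|contradiction].
    apply count_below_ext. intros b _. unfold seg.
    destruct c as [c0|]; simpl in *; [|tauto].
    split; [intros [? ?]; repeat split; eauto using prec_trans|tauto]. }
  split.
  - rewrite Hx_rank. unfold rank. destruct (decideP (supp y m)); [|contradiction].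
    apply (count_below_init_seg (fun a => prec y a m) (fun b => prec x b m)); auto.
    intros a Ha. rewrite <- (HR.(isv_fix) m Hy) at 2 by lia. apply HR.(isv_prec); auto.
  - rewrite Hx_rank. apply count_below_mono. tauto.
Qed.

Lemma rank_init_seg_nonmember m : n <= m -> ~ supp y m -> rank y m = count_below seg m.
Proof.
  intros Hm Hy. unfold rank. destruct (decideP (supp y m)); [contradiction|].
  apply count_supp_init_seg, Hm.
Qed.

(* The cut point c0 < m precedes such an m, so it is counted in [rank x m]
   but not in the segment: this is how the code of x reveals the cut. *)
Lemma count_init_seg_lt_rank m c0 : n <= m -> c = Some c0 -> c0 < m ->
  supp x m -> ~ supp y m -> count_below seg m < rank x m.
Proof.
  intros Hm Ec Hc0 Hx Hy. pose proof HR.(isv_cut) as Hc. rewrite Ec in Hc.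
  assert (Hmc : ~ prec x m c0)
    by (intros Ho; apply Hy, supp_init_seg; [|split; [|rewrite Ec]]; auto).
  assert (Hcm : prec x c0 m).
  { destruct (prec_total x m c0 Hx Hc) as [?|?]; [lia|contradiction|auto]. }
  unfold rank. destruct (decideP (supp x m)); [|contradiction].
  apply (count_below_lt _ _ _ c0); auto.
  - intros b _ [? Hb]. unfold below_cut in Hb; rewrite Ec in Hb. eauto using prec_trans.
  - intros [_ Hb]. unfold below_cut in Hb; rewrite Ec in Hb. apply (prec_irrefl x c0 Hb).
Qed.

Lemma encode_block_init_seg m : n <= m -> (forall c0, c = Some c0 -> c0 < m) ->
  rank y m = Nat.min (rank x m) (count_below (supp y) m) /\
  decide (supp y m) = decide (supp x m) && (rank x m <=? count_below (supp y) m).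
Proof.
  intros Hm Hc. rewrite count_supp_init_seg by exact Hm.
  destruct (decideP (supp y m)) as [Hy|Hy].
  - destruct (rank_init_seg_member m Hm Hy) as [-> Hle].
    destruct (proj1 (supp_init_seg m Hm) Hy) as [Hx _].
    destruct (decideP (supp x m)); [|contradiction].
    split; [lia|symmetry; apply Nat.leb_le, Hle].
  - rewrite rank_init_seg_nonmember by auto.
    destruct (decideP (supp x m)) as [Hx|Hx].
    + case_eq c; [intros c0 Ec|intros Ec].
      2: { exfalso. apply Hy, supp_init_seg; [|split; [|unfold below_cut; rewrite Ec]]; auto. }
      pose proof (count_init_seg_lt_rank m c0 Hm Ec (Hc c0 Ec) Hx Hy).
      split; [lia|symmetry; apply Nat.leb_gt; auto].
    + assert (count_below seg m <= count_below (supp x) m)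
        by (apply count_below_mono; unfold seg; tauto).
      unfold rank. destruct (decideP (supp x m)); [contradiction|]. split; [lia|auto].
Qed.

End InitSegCode.

Lemma decoder_init_seg y x : init_seg y x ->
  exists N h H, encode y = decoder N h H (encode x).
Proof.
  intros [c [pi [n HR]]].
  set (N := n + match c with Some c0 => c0 | None => 0 end).
  assert (Hblock : forall m, N < m ->
    rank y m = Nat.min (rank x m) (count_below (supp y) m) /\
    decide (supp y m) = keeps (encode x) m (count_below (supp y) m)).
  { intros m Hm. unfold keeps.
    rewrite unary_value_encode, encode_block_pos, Nat.ltb_irrefl by lia.
    apply (encode_block_init_seg y x c pi n HR); unfold N in Hm; [lia|intros c0 ->; lia]. }
  exists N, (count_below (supp y) (S N)), (prefix_code (encode y) (tri (S N))).
  assert (Hcount : forall d,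
    seg_count N (count_below (supp y) (S N)) (encode x) d = count_below (supp y) (S N + d)).
  { induction d as [|d IH]; [now rewrite Nat.add_0_r|].
    cbn [seg_count]. rewrite IH, Nat.add_succ_r, count_below_S.
    rewrite <- (proj2 (Hblock (S N + d) ltac:(lia))). reflexivity. }
  apply functional_extensionality. intros p. unfold decoder.
  destruct (block_of p) as [m k] eqn:E. destruct (block_of_inv _ _ _ E) as [Hk <-].
  destruct (Nat.leb_spec m N).
  - rewrite testbit_prefix_code; [reflexivity|].
    pose proof (block_pos_lt_tri m k Hk). pose proof (tri_mono (S m) (S N) ltac:(lia)). lia.
  - rewrite Hcount. replace (S N + (m - S N)) with m by lia.
    destruct (Hblock m ltac:(lia)) as [Hrank Hsupp].
    rewrite !encode_block_pos by exact Hk.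
    destruct (Nat.ltb_spec k m); [|assert (k = m) by lia; subst k; exact Hsupp].
    rewrite Hrank. apply Bool.eq_iff_eq_true. rewrite Bool.andb_true_iff, !Nat.ltb_lt. lia.
Qed.

(** * The limit of an increasing chain of linear orders *)

Definition next_nonmember (X : linord) (a : nat) : nat :=
  proj1_sig (constructive_indefinite_description _ (supp_coinfinite X a)).

Lemma next_nonmember_spec X a : a <= next_nonmember X a /\ ~ supp X (next_nonmember X a).
Proof. unfold next_nonmember. destruct (constructive_indefinite_description _ _); auto. Qed.

Fixpoint nonmember_seq (X : linord) (a0 i : nat) : nat :=
  match i with
  | 0 => next_nonmember X a0
  | S i' => next_nonmember X (S (nonmember_seq X a0 i'))
  end.

Lemma nonmember_seq_notin X a0 i : ~ supp X (nonmember_seq X a0 i).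
Proof. destruct i; apply next_nonmember_spec. Qed.

Lemma nonmember_seq_ge X a0 i : a0 + i <= nonmember_seq X a0 i.
Proof.
  induction i as [|i IH]; simpl.
  - pose proof (next_nonmember_spec X a0). lia.
  - pose proof (next_nonmember_spec X (S (nonmember_seq X a0 i))). lia.
Qed.

Lemma nonmember_seq_lt X a0 i j : i < j -> nonmember_seq X a0 i < nonmember_seq X a0 j.
Proof.
  induction 1 as [|j _ IH]; simpl.
  - pose proof (next_nonmember_spec X (S (nonmember_seq X a0 i))). lia.
  - pose proof (next_nonmember_spec X (S (nonmember_seq X a0 j))). lia.
Qed.

Lemma nonmember_seq_inj X a0 i j : nonmember_seq X a0 i = nonmember_seq X a0 j -> i = j.
Proof.
  intros E. destruct (Nat.lt_trichotomy i j) as [H|[H|H]]; auto;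
    apply (nonmember_seq_lt X a0) in H; lia.
Qed.

Section ChainLimit.
Variables (T : nat -> linord) (cut : nat -> option nat) (pi : nat -> nat -> nat) (bnd : nat -> nat).
Hypothesis HT : forall i, init_seg_via (T i) (T (S i)) (cut i) (pi i) (bnd i).

(* Points born at stage j (in T j but not coming from T (j-1)) are named in the limit by
   [label]: those below [stage_bound j] are moved to fresh names in
   [stage_bound j, stage_bound (S j)), the others, which no later [pi] moves, keep their name. *)
Fixpoint stage_bound (j : nat) : nat :=
  match j with
  | 0 => 0
  | S j' => stage_bound j' + bnd j' + nonmember_seq (T j') (stage_bound j') (stage_bound j') + 1
  end.

Lemma stage_bound_S j :
  stage_bound j < stage_bound (S j) /\ bnd j < stage_bound (S j) /\
  nonmember_seq (T j) (stage_bound j) (stage_bound j) < stage_bound (S j).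
Proof. simpl; lia. Qed.

Lemma stage_bound_mono j k : j <= k -> stage_bound j <= stage_bound k.
Proof. induction 1 as [|k _ IH]; auto. pose proof (stage_bound_S k); lia. Qed.

Lemma stage_bound_ge j : j <= stage_bound j.
Proof. induction j; simpl; lia. Qed.

Definition born (j a : nat) : Prop :=
  match j with
  | 0 => supp (T 0) a
  | S j' => supp (T (S j')) a /\ ~ below_cut (T (S j')) (cut j') a
  end.

Lemma born_supp j a : born j a -> supp (T j) a.
Proof. destruct j; simpl; tauto. Qed.

Definition label (j a : nat) : nat :=
  if a <? stage_bound j then nonmember_seq (T j) (stage_bound j) a else a.

Fixpoint transport (j k a : nat) : nat :=
  match k with 0 => a | S k' => if j <=? k' then pi k' (transport j k' a) else a end.

Lemma transport_refl j a : transport j j a = a.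
Proof.
  destruct j; [reflexivity|]. cbn [transport].
  destruct (Nat.leb_spec (S j) j); [lia|reflexivity].
Qed.

Lemma transport_S j k a : j <= k -> transport j (S k) a = pi k (transport j k a).
Proof. intros H; simpl. destruct (Nat.leb_spec j k); auto; lia. Qed.

Lemma transport_supp j k a : supp (T j) a -> j <= k -> supp (T k) (transport j k a).
Proof.
  intros Ha. induction k as [|k IH]; intros Hk.
  - replace j with 0 in * by lia. exact Ha.
  - destruct (Nat.eq_dec j (S k)) as [->|Hne]; [rewrite transport_refl; auto|].
    rewrite transport_S by lia. apply (HT k).(isv_into), IH. lia.
Qed.

Lemma transport_below_cut j k a : supp (T j) a -> j <= k ->
  below_cut (T (S k)) (cut k) (transport j (S k) a).
Proof.
  intros Ha Hk. rewrite transport_S by exact Hk.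
  apply (HT k).(isv_into), transport_supp; auto.
Qed.

Lemma transport_inj j k a1 a2 : supp (T j) a1 -> supp (T j) a2 -> j <= k ->
  transport j k a1 = transport j k a2 -> a1 = a2.
Proof.
  intros H1 H2. induction k as [|k IH]; intros Hk E.
  - replace j with 0 in * by lia. exact E.
  - destruct (Nat.eq_dec j (S k)) as [->|Hne]; [rewrite !transport_refl in E; auto|].
    rewrite !transport_S in E by lia. apply IH; [lia|].
    apply (HT k).(isv_inj); auto; apply transport_supp; auto; lia.
Qed.

Lemma transport_prec j k a1 a2 : supp (T j) a1 -> supp (T j) a2 -> j <= k ->
  (prec (T j) a1 a2 <-> prec (T k) (transport j k a1) (transport j k a2)).
Proof.
  intros H1 H2. induction k as [|k IH]; intros Hk.
  - replace j with 0 in * by lia. reflexivity.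
  - destruct (Nat.eq_dec j (S k)) as [->|Hne]; [rewrite !transport_refl; tauto|].
    rewrite !transport_S, IH by lia.
    apply (HT k).(isv_prec); apply transport_supp; auto; lia.
Qed.

Lemma transport_comp j i k a : j <= i -> i <= k ->
  transport j k a = transport i k (transport j i a).
Proof.
  intros H1. induction k as [|k IH]; intros H2.
  - replace i with 0 in * by lia. replace j with 0 by lia. reflexivity.
  - destruct (Nat.eq_dec i (S k)) as [->|Hne]; [now rewrite transport_refl|].
    rewrite !transport_S, IH by lia. reflexivity.
Qed.

Lemma transport_lt_stage_bound j i k a : supp (T j) a -> a < stage_bound k -> j <= i -> i <= k ->
  transport j i a < stage_bound k.
Proof.
  intros Ha Hak Hji. induction i as [|i IH]; intros Hik.
  - replace j with 0 by lia. exact Hak.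
  - destruct (Nat.eq_dec j (S i)) as [->|Hne]; [rewrite transport_refl; auto|].
    rewrite transport_S by lia.
    specialize (IH ltac:(lia) ltac:(lia)).
    assert (HL : supp (T i) (transport j i a)) by (apply transport_supp; auto; lia).
    pose proof (stage_bound_S i). pose proof (stage_bound_mono (S i) k ltac:(lia)).
    destruct (Nat.le_gt_cases (bnd i) (transport j i a));
      [rewrite (HT i).(isv_fix); auto|].
    destruct (Nat.le_gt_cases (bnd i) (pi i (transport j i a))); [|lia].
    rewrite (HT i).(isv_fix); auto.
Qed.

Lemma transport_fix j i k a : supp (T j) a -> stage_bound k <= a -> j <= i -> i <= k ->
  transport j i a = a.
Proof.
  intros Ha Hak Hji. induction i as [|i IH]; intros Hik.
  - replace j with 0 by lia. reflexivity.
  - destruct (Nat.eq_dec j (S i)) as [->|Hne]; [apply transport_refl|].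
    rewrite transport_S, IH by lia.
    pose proof (stage_bound_S i). pose proof (stage_bound_mono (S i) k ltac:(lia)).
    apply (HT i).(isv_fix); [|lia].
    rewrite <- (IH ltac:(lia) ltac:(lia)). apply transport_supp; auto; lia.
Qed.

Lemma label_fresh j a : a < stage_bound j ->
  stage_bound j <= label j a /\ label j a < stage_bound (S j) /\ ~ supp (T j) (label j a).
Proof.
  intros H. unfold label. destruct (Nat.ltb_spec a (stage_bound j)); [|lia].
  pose proof (nonmember_seq_ge (T j) (stage_bound j) a).
  pose proof (nonmember_seq_lt (T j) (stage_bound j) a (stage_bound j) H).
  pose proof (stage_bound_S j).
  split; [lia|split; [lia|apply nonmember_seq_notin]].
Qed.

Lemma label_large j a : stage_bound j <= a -> label j a = a.
Proof. intros H. unfold label. destruct (Nat.ltb_spec a (stage_bound j)); auto; lia. Qed.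

Lemma label_ge_stage_bound j a : stage_bound j <= label j a.
Proof.
  destruct (Nat.lt_ge_cases a (stage_bound j)) as [F|F];
    [apply label_fresh, F|rewrite label_large; auto].
Qed.

Lemma label_inj j a1 a2 : born j a1 -> born j a2 -> label j a1 = label j a2 -> a1 = a2.
Proof.
  intros H1 H2 E. apply born_supp in H1, H2.
  destruct (Nat.lt_ge_cases a1 (stage_bound j)) as [F1|F1],
    (Nat.lt_ge_cases a2 (stage_bound j)) as [F2|F2].
  - unfold label in E.
    destruct (Nat.ltb_spec a1 (stage_bound j)), (Nat.ltb_spec a2 (stage_bound j)); try lia.
    eapply nonmember_seq_inj; eauto.
  - rewrite (label_large j a2) in E by auto.
    destruct (label_fresh j a1 F1) as [_ [_ H]]. rewrite E in H. contradiction.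
  - rewrite (label_large j a1) in E by auto.
    destruct (label_fresh j a2 F2) as [_ [_ H]]. rewrite <- E in H. contradiction.
  - rewrite !label_large in E; auto.
Qed.

Lemma label_earlier_neq j1 j2 a1 a2 : j1 < j2 -> born j1 a1 -> born j2 a2 ->
  label j1 a1 <> label j2 a2.
Proof.
  intros Hj H1 H2 E.
  pose proof (born_supp _ _ H1) as L1.
  pose proof (stage_bound_mono (S j1) j2 ltac:(lia)) as Hbound.
  pose proof (label_ge_stage_bound j2 a2) as Hlabel.
  destruct (Nat.lt_ge_cases a1 (stage_bound j1)) as [F1|F1].
  { destruct (label_fresh j1 a1 F1) as [_ [? _]]. lia. }
  rewrite (label_large j1 a1 F1) in E.
  assert (Hp : transport j1 j2 a1 = a1) by (apply (transport_fix j1 j2 j2); auto; lia).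
  assert (HL : supp (T j2) a1) by (rewrite <- Hp; apply transport_supp; auto; lia).
  destruct (Nat.lt_ge_cases a2 (stage_bound j2)) as [F2|F2].
  - destruct (label_fresh j2 a2 F2) as [_ [_ Hn]]. rewrite <- E in Hn. contradiction.
  - rewrite (label_large j2 a2 F2) in E. subst a2.
    destruct j2 as [|j']; [lia|].
    apply (proj2 H2). rewrite <- Hp. apply transport_below_cut; auto; lia.
Qed.

Lemma label_born_inj j1 a1 j2 a2 : born j1 a1 -> born j2 a2 ->
  label j1 a1 = label j2 a2 -> j1 = j2 /\ a1 = a2.
Proof.
  intros H1 H2 E.
  destruct (Nat.lt_trichotomy j1 j2) as [Hl|[<-|Hl]].
  - exfalso; eapply label_earlier_neq; eauto.
  - split; [reflexivity|]. eapply label_inj; eauto.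
  - exfalso; eapply label_earlier_neq; eauto.
Qed.

Definition limit_supp (l : nat) : Prop := exists j a, born j a /\ label j a = l.

Definition limit_prec (l1 l2 : nat) : Prop :=
  exists j1 a1 j2 a2, born j1 a1 /\ born j2 a2 /\ label j1 a1 = l1 /\ label j2 a2 = l2 /\
    (j1 < j2 \/ (j1 = j2 /\ prec (T j1) a1 a2)).

Lemma limit_prec_label j1 a1 j2 a2 : born j1 a1 -> born j2 a2 ->
  (limit_prec (label j1 a1) (label j2 a2) <-> (j1 < j2 \/ (j1 = j2 /\ prec (T j1) a1 a2))).
Proof.
  intros H1 H2. split.
  - intros [i1 [b1 [i2 [b2 [G1 [G2 [E1 [E2 Ho]]]]]]]].
    destruct (label_born_inj _ _ _ _ G1 H1 E1) as [-> ->].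
    destruct (label_born_inj _ _ _ _ G2 H2 E2) as [-> ->]. exact Ho.
  - intros Ho. exists j1, a1, j2, a2. auto.
Qed.

Lemma limit_prec_irrefl l : ~ limit_prec l l.
Proof.
  intros [j1 [a1 [j2 [a2 [G1 [G2 [E1 [E2 Ho]]]]]]]].
  rewrite <- E2 in E1. destruct (label_born_inj _ _ _ _ G1 G2 E1) as [-> ->].
  destruct Ho as [?|[_ Ho]]; [lia|apply (prec_irrefl _ _ Ho)].
Qed.

Lemma limit_prec_trans l1 l2 l3 : limit_prec l1 l2 -> limit_prec l2 l3 -> limit_prec l1 l3.
Proof.
  intros [j1 [a1 [j2 [a2 [G1 [G2 [E1 [E2 Ho]]]]]]]]
    [i2 [b2 [j3 [a3 [F2 [G3 [E2' [E3 Ho']]]]]]]].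
  rewrite <- E2' in E2. destruct (label_born_inj _ _ _ _ G2 F2 E2) as [<- <-].
  exists j1, a1, j3, a3. repeat split; auto.
  destruct Ho as [?|[<- ?]], Ho' as [?|[<- ?]]; try (left; lia).
  right. eauto using prec_trans.
Qed.

Lemma limit_prec_total l1 l2 : limit_supp l1 -> limit_supp l2 -> l1 <> l2 ->
  limit_prec l1 l2 \/ limit_prec l2 l1.
Proof.
  intros [j1 [a1 [H1 <-]]] [j2 [a2 [H2 <-]]] Hne.
  rewrite !limit_prec_label by auto.
  destruct (Nat.lt_trichotomy j1 j2) as [Hl|[<-|Hl]]; auto.
  destruct (Nat.eq_dec a1 a2) as [<-|Hna]; [contradiction|].
  destruct (prec_total (T j1) a1 a2 (born_supp _ _ H1) (born_supp _ _ H2) Hna); auto.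
Qed.

Lemma limit_supp_coinfinite a : exists b, a <= b /\ ~ limit_supp b.
Proof.
  set (r := nonmember_seq (T a) (stage_bound a) (stage_bound a)).
  assert (Hr1 : stage_bound a + stage_bound a <= r) by apply nonmember_seq_ge.
  assert (Hr2 : r < stage_bound (S a)) by apply stage_bound_S.
  assert (Hr : ~ supp (T a) r) by apply nonmember_seq_notin.
  exists r. split; [pose proof (stage_bound_ge a); lia|].
  intros [j [a' [Hn E]]]. pose proof (born_supp _ _ Hn) as HL.
  destruct (Nat.lt_trichotomy j a) as [Hl|[->|Hl]].
  - destruct (Nat.lt_ge_cases a' (stage_bound j)) as [F|F].
    + destruct (label_fresh j a' F) as [_ [? _]].
      pose proof (stage_bound_mono (S j) a ltac:(lia)). lia.
    + rewrite label_large in E by exact F. subst a'.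
      apply Hr. rewrite <- (transport_fix j a a r) by (auto; lia).
      apply transport_supp; auto; lia.
  - destruct (Nat.lt_ge_cases a' (stage_bound a)) as [F|F].
    + unfold label in E. destruct (Nat.ltb_spec a' (stage_bound a)); [|lia].
      apply nonmember_seq_inj in E. lia.
    + rewrite label_large in E by exact F. subst a'. contradiction.
  - pose proof (label_ge_stage_bound j a').
    pose proof (stage_bound_mono (S a) j ltac:(lia)). lia.
Qed.

Definition limit_order : linord :=
  Build_linord limit_supp limit_prec limit_prec_irrefl limit_prec_trans limit_prec_total
    limit_supp_coinfinite.

Lemma transport_born_exists k b : supp (T k) b ->
  exists j a, j <= k /\ born j a /\ transport j k a = b.
Proof.
  revert b. induction k as [|k IH]; intros b Hb.
  - exists 0, b. auto.
  - destruct (classic (below_cut (T (S k)) (cut k) b)) as [Hbel|Hbel].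
    + destruct ((HT k).(isv_onto) b Hb Hbel) as [a [Ha <-]].
      destruct (IH a Ha) as [j [a' [Hj [Hn <-]]]].
      exists j, a'. rewrite transport_S by exact Hj. auto.
    + exists (S k), b. split; [lia|]. split; [split; auto|apply transport_refl].
Qed.

(* A point born at stage j2 > j1 lies outside the cut that bounds all older points. *)
Lemma prec_transport_earlier k j1 a1 j2 a2 : j1 < j2 -> j2 <= k -> born j1 a1 -> born j2 a2 ->
  prec (T k) (transport j1 k a1) (transport j2 k a2).
Proof.
  intros Hl Hk H1 H2.
  pose proof (born_supp _ _ H1) as L1. pose proof (born_supp _ _ H2) as L2.
  destruct j2 as [|j]; [lia|].
  assert (Hv : below_cut (T (S j)) (cut j) (transport j1 (S j) a1))
    by (apply transport_below_cut; auto; lia).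
  assert (HvL : supp (T (S j)) (transport j1 (S j) a1)) by (apply transport_supp; auto; lia).
  assert (Hprec : prec (T (S j)) (transport j1 (S j) a1) a2).
  { destruct H2 as [_ Hn2]. pose proof (HT j).(isv_cut) as Hc.
    destruct (cut j) as [c|]; simpl in *; [|exfalso; apply Hn2; auto].
    destruct (Nat.eq_dec a2 c) as [->|Hne]; auto.
    destruct (prec_total _ a2 c L2 Hc Hne) as [?|?]; [contradiction|].
    eauto using prec_trans. }
  rewrite (transport_comp j1 (S j) k) by lia.
  apply transport_prec; auto.
Qed.

Lemma prec_transport_born k j1 a1 j2 a2 : j1 <= k -> j2 <= k -> born j1 a1 -> born j2 a2 ->
  (prec (T k) (transport j1 k a1) (transport j2 k a2) <->
   (j1 < j2 \/ (j1 = j2 /\ prec (T j1) a1 a2))).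
Proof.
  intros Hk1 Hk2 H1 H2.
  destruct (Nat.lt_trichotomy j1 j2) as [Hl|[<-|Hl]].
  - split; auto. intros _. apply prec_transport_earlier; auto.
  - rewrite <- transport_prec by (auto; apply born_supp; auto).
    split; auto. intros [?|[_ ?]]; auto; lia.
  - split; [|intros [?|[? _]]; lia].
    intros Ho. exfalso. pose proof (prec_transport_earlier k j2 a2 j1 a1 Hl Hk1 H2 H1).
    apply (prec_irrefl (T k) (transport j1 k a1)). eauto using prec_trans.
Qed.

Lemma transport_born_inj k j1 a1 j2 a2 : j1 <= k -> j2 <= k -> born j1 a1 -> born j2 a2 ->
  transport j1 k a1 = transport j2 k a2 -> j1 = j2 /\ a1 = a2.
Proof.
  intros Hk1 Hk2 H1 H2 E.
  destruct (Nat.lt_trichotomy j1 j2) as [Hl|[<-|Hl]].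
  - exfalso. pose proof (prec_transport_earlier k j1 a1 j2 a2 Hl Hk2 H1 H2) as Ho.
    rewrite E in Ho. apply (prec_irrefl _ _ Ho).
  - split; [reflexivity|]. eapply transport_inj; eauto; apply born_supp; auto.
  - exfalso. pose proof (prec_transport_earlier k j2 a2 j1 a1 Hl Hk1 H2 H1) as Ho.
    rewrite E in Ho. apply (prec_irrefl _ _ Ho).
Qed.

Definition relabel (k b : nat) : nat :=
  match excluded_middle_informative
    (exists q : nat * nat, fst q <= k /\ born (fst q) (snd q) /\ transport (fst q) k (snd q) = b)
  with
  | left H => let q := proj1_sig (constructive_indefinite_description _ H) in label (fst q) (snd q)
  | right _ => b
  end.

Lemma relabel_spec k b : supp (T k) b ->
  exists j a, j <= k /\ born j a /\ transport j k a = b /\ relabel k b = label j a.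
Proof.
  intros Hb. unfold relabel. destruct (excluded_middle_informative _) as [H|H].
  - destruct (constructive_indefinite_description _ H) as [[j a] ?]; simpl in *.
    exists j, a. tauto.
  - exfalso. destruct (transport_born_exists k b Hb) as [j [a ?]].
    apply H. exists (j, a). auto.
Qed.

Lemma relabel_fix k b : supp (T k) b ->
  stage_bound (S k) <= b \/ stage_bound (S k) <= relabel k b -> relabel k b = b.
Proof.
  intros Hb Hbnd. destruct (relabel_spec k b Hb) as [j [a [Hj [Hn [Ei Es]]]]].
  pose proof (born_supp _ _ Hn) as HL.
  pose proof (stage_bound_mono (S j) (S k) ltac:(lia)).
  pose proof (stage_bound_mono j k Hj). pose proof (stage_bound_S k).
  destruct (Nat.lt_ge_cases a (stage_bound j)) as [F|F].
  - exfalso. destruct (label_fresh j a F) as [_ [? _]].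
    assert (transport j k a < stage_bound k) by (apply transport_lt_stage_bound; auto; lia).
    lia.
  - rewrite Es, label_large by exact F.
    destruct (Nat.lt_ge_cases a (stage_bound k)) as [F'|F'].
    + exfalso. assert (transport j k a < stage_bound k) by (apply transport_lt_stage_bound; auto).
      rewrite Es, label_large in Hbnd by exact F. lia.
    + rewrite <- Ei. symmetry. apply (transport_fix j k k); auto.
Qed.

Lemma init_seg_limit_of_cut k c : cut_in_supp limit_order c ->
  (forall l, limit_supp l ->
    (below_cut limit_order c l <-> exists j a, j <= k /\ born j a /\ label j a = l)) ->
  init_seg (T k) limit_order.
Proof.
  intros Hcut Hseg. exists c, (relabel k), (stage_bound (S k)).
  split; [exact Hcut| | | | |exact (relabel_fix k)].
  - intros b Hb. destruct (relabel_spec k b Hb) as [j [a [Hj [Hn [Ei ->]]]]].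
    assert (HL : limit_supp (label j a)) by (exists j, a; auto).
    split; [exact HL|]. apply Hseg; [exact HL|]. exists j, a; auto.
  - intros b1 b2 Hb1 Hb2 E.
    destruct (relabel_spec k b1 Hb1) as [j1 [a1 [Hj1 [Hn1 [<- Es1]]]]].
    destruct (relabel_spec k b2 Hb2) as [j2 [a2 [Hj2 [Hn2 [<- Es2]]]]].
    rewrite Es1, Es2 in E. destruct (label_born_inj _ _ _ _ Hn1 Hn2 E) as [<- <-]. reflexivity.
  - intros l Hl Hbel. destruct (proj1 (Hseg l Hl) Hbel) as [j [a [Hj [Hn <-]]]].
    assert (HL : supp (T k) (transport j k a))
      by (apply transport_supp; auto; apply born_supp; auto).
    exists (transport j k a). split; [exact HL|].
    destruct (relabel_spec k _ HL) as [j' [a' [Hj' [Hn' [Ei ->]]]]].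
    destruct (transport_born_inj k j' a' j a Hj' Hj Hn' Hn Ei) as [-> ->]. reflexivity.
  - intros b1 b2 Hb1 Hb2.
    destruct (relabel_spec k b1 Hb1) as [j1 [a1 [Hj1 [Hn1 [<- Es1]]]]].
    destruct (relabel_spec k b2 Hb2) as [j2 [a2 [Hj2 [Hn2 [<- Es2]]]]].
    simpl. rewrite Es1, Es2, limit_prec_label by auto. apply prec_transport_born; auto.
Qed.

Lemma init_seg_chain k d : init_seg (T k) (T (k + d)).
Proof.
  induction d as [|d IH]; [rewrite Nat.add_0_r; apply init_seg_refl|].
  apply (init_seg_trans _ _ _ IH). rewrite Nat.add_succ_r.
  exists (cut (k + d)), (pi (k + d)), (bnd (k + d)). apply HT.
Qed.

(* If some later stage j has a cut point c, then T k sits below the label of c;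
   otherwise the chain is eventually onto and T k sits below nothing. *)
Lemma init_seg_limit k : init_seg (T k) limit_order.
Proof.
  destruct (classic (exists j c, k <= j /\ cut j = Some c)) as [[j [c [Hkj Hc]]]|Hno].
  - pose proof (init_seg_chain k (j - k)) as Hch. replace (k + (j - k)) with j in Hch by lia.
    apply (init_seg_trans _ _ _ Hch).
    assert (HcL : supp (T (S j)) c) by (pose proof (HT j).(isv_cut) as H; rewrite Hc in H; exact H).
    assert (HnC : born (S j) c) by (simpl; rewrite Hc; simpl; split; auto; apply prec_irrefl).
    apply (init_seg_limit_of_cut j (Some (label (S j) c))); [exists (S j), c; auto|].
    intros l [j' [a' [Hn' <-]]]. simpl. rewrite limit_prec_label by auto. split.
    + intros [Hl|[-> Ho]]; [exists j', a'; split; auto; lia|].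
      exfalso. destruct Hn' as [_ Hn']. rewrite Hc in Hn'. contradiction.
    + intros [j'' [a'' [Hj'' [Hn'' E]]]].
      destruct (label_born_inj _ _ _ _ Hn'' Hn' E) as [-> ->]. left; lia.
  - apply (init_seg_limit_of_cut k None); [exact I|].
    intros l [j' [a' [Hn' <-]]]. split; [intros _|exact (fun _ => I)].
    exists j', a'. split; auto.
    destruct (Nat.le_gt_cases j' k) as [?|Hg]; auto.
    exfalso. destruct j' as [|j]; [lia|].
    apply (proj2 Hn'). destruct (cut j) as [c|] eqn:E; [|exact I].
    exfalso. apply Hno. exists j, c. split; auto; lia.
Qed.

End ChainLimit.

(** * Countable chains have upper bounds with new codes *)

Section TopExtension.
Variables (Y : linord) (w : nat -> bool).

(* Y followed by new points among the fresh points [top_point i]: [top_point 0] (the cut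
   below which Y sits) and [top_point (2j+2)] exactly when [w j]; the odd ones stay out so
   that the support remains co-infinite. *)
Definition top_point (i : nat) : nat := nonmember_seq Y 0 i.

Definition top_new (l : nat) : Prop :=
  l = top_point 0 \/ exists j, w j = true /\ l = top_point (2 * j + 2).

Definition top_supp (l : nat) : Prop := supp Y l \/ top_new l.

Definition top_prec (a b : nat) : Prop :=
  (supp Y a /\ supp Y b /\ prec Y a b) \/ (supp Y a /\ top_new b) \/
  (top_new a /\ top_new b /\ a < b).

Lemma top_new_notin l : top_new l -> ~ supp Y l.
Proof. intros [->|[j [_ ->]]]; apply nonmember_seq_notin. Qed.

Lemma top_prec_irrefl a : ~ top_prec a a.
Proof.
  intros [[_ [_ H]]|[[H1 H2]|[_ [_ H]]]];
    [apply (prec_irrefl _ _ H)|apply (top_new_notin _ H2 H1)|lia].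
Qed.

Lemma top_prec_trans a b c : top_prec a b -> top_prec b c -> top_prec a c.
Proof.
  intros [[Ha [Hb Hab]]|[[Ha Hb]|[Ha [Hb Hab]]]] [[Hb' [Hc Hbc]]|[[Hb' Hc]|[Hb' [Hc Hbc]]]];
    try (exfalso; apply (top_new_notin b); assumption).
  - left. eauto using prec_trans.
  - right; left; auto.
  - right; left; auto.
  - right; right; repeat split; auto; lia.
Qed.

Lemma top_prec_total a b : top_supp a -> top_supp b -> a <> b -> top_prec a b \/ top_prec b a.
Proof.
  intros [Ha|Ha] [Hb|Hb] Hne.
  - destruct (prec_total Y a b Ha Hb Hne); [left|right]; left; auto.
  - left; right; left; auto.
  - right; right; left; auto.
  - destruct (Nat.lt_trichotomy a b) as [?|[?|?]]; [left|contradiction|right]; right; right; auto.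
Qed.

Lemma top_supp_coinfinite a : exists b, a <= b /\ ~ top_supp b.
Proof.
  exists (top_point (2 * a + 1)). split.
  - pose proof (nonmember_seq_ge Y 0 (2 * a + 1)). unfold top_point. lia.
  - intros [H|[H|[j [_ H]]]].
    + apply (nonmember_seq_notin Y 0 (2 * a + 1) H).
    + apply nonmember_seq_inj in H. lia.
    + apply nonmember_seq_inj in H. lia.
Qed.

Definition top_extension : linord :=
  Build_linord top_supp top_prec top_prec_irrefl top_prec_trans top_prec_total
    top_supp_coinfinite.

Lemma init_seg_top_extension : init_seg Y top_extension.
Proof.
  exists (Some (top_point 0)), (fun a => a), 0.
  split; [simpl; right; left; auto| | | | |]; simpl.
  - intros a Ha. split; [left; auto|]. right; left; split; auto. left; auto.
  - auto.
  - intros b Hb Ho. exists b. split; auto.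
    destruct Ho as [[? _]|[[? _]|[[Hb'|[j [_ Hb']]] [_ Hlt]]]]; auto; [lia|].
    exfalso. pose proof (nonmember_seq_lt Y 0 0 (2 * j + 2) ltac:(lia)).
    unfold top_point in *. lia.
  - intros a1 a2 H1 H2. split; [intros; left; auto|].
    intros [[_ [_ ?]]|[[_ Hn]|[Hn _]]]; auto; exfalso; eapply top_new_notin; eauto.
  - auto.
Qed.

Lemma encode_top_extension_diag j :
  encode top_extension (block_pos (top_point (2 * j + 2)) (top_point (2 * j + 2))) = w j.
Proof.
  rewrite encode_block_pos, Nat.ltb_irrefl by lia.
  destruct (decideP (supp top_extension (top_point (2 * j + 2)))) as [Hs|Hs]; simpl in Hs.
  - destruct Hs as [H|[H|[j' [E H]]]].
    + exfalso. apply (nonmember_seq_notin Y 0 (2 * j + 2) H).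
    + apply nonmember_seq_inj in H. lia.
    + apply nonmember_seq_inj in H. replace j with j' by lia. auto.
  - destruct (w j) eqn:E; [|reflexivity].
    exfalso. apply Hs. right; right. exists j; auto.
Qed.

End TopExtension.

Fixpoint climb (h : nat -> linord) (k : nat) : linord :=
  match k with
  | 0 => h 0
  | S k' => if decide (init_seg (climb h k') (h (S k'))) then h (S k') else climb h k'
  end.

Lemma climb_in (h : nat -> linord) k : exists j, climb h k = h j.
Proof.
  induction k as [|k IH]; simpl; [exists 0; auto|].
  destruct (decide (init_seg (climb h k) (h (S k)))); [exists (S k)|]; auto.
Qed.

Lemma init_seg_climb_S (h : nat -> linord) k : init_seg (climb h k) (climb h (S k)).
Proof.
  simpl. destruct (decideP (init_seg (climb h k) (h (S k)))); auto. apply init_seg_refl.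
Qed.

Lemma init_seg_climb (h : nat -> linord) :
  (forall i j, init_seg (h i) (h j) \/ init_seg (h j) (h i)) ->
  forall k, init_seg (h k) (climb h k).
Proof.
  intros Hchain [|k]; simpl; [apply init_seg_refl|].
  destruct (decideP (init_seg (climb h k) (h (S k)))) as [|Hn]; [apply init_seg_refl|].
  destruct (climb_in h k) as [j Ej]. rewrite Ej in *.
  destruct (Hchain (S k) j); [assumption|contradiction].
Qed.

Lemma chain_strict_upper_bound (h : nat -> linord) :
  (forall i j, init_seg (h i) (h j) \/ init_seg (h j) (h i)) ->
  exists z, (forall i, init_seg (h i) z) /\ (forall i, encode z <> encode (h i)).
Proof.
  intros Hchain.
  assert (Hstep : forall i, {q : option nat * (nat -> nat) * nat |
     init_seg_via (climb h i) (climb h (S i)) (fst (fst q)) (snd (fst q)) (snd q)}).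
  { intros i. apply constructive_indefinite_description.
    destruct (init_seg_climb_S h i) as [c [p [n Hr]]]. exists (c, p, n). exact Hr. }
  set (cut i := fst (fst (proj1_sig (Hstep i)))).
  set (pi i := snd (fst (proj1_sig (Hstep i)))).
  set (bnd i := snd (proj1_sig (Hstep i))).
  assert (HT : forall i, init_seg_via (climb h i) (climb h (S i)) (cut i) (pi i) (bnd i))
    by (intros i; exact (proj2_sig (Hstep i))).
  set (Y := limit_order (climb h) cut pi bnd HT).
  set (w j := negb (encode (h j) (block_pos (top_point Y (2 * j + 2)) (top_point Y (2 * j + 2))))).
  exists (top_extension Y w). split.
  - intros i. apply (init_seg_trans _ _ _ (init_seg_climb h Hchain i)).
    apply (init_seg_trans _ Y); [apply init_seg_limit|apply init_seg_top_extension].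
  - intros i E. pose proof (encode_top_extension_diag Y w i) as Hdiag.
    rewrite E in Hdiag. unfold w in Hdiag. destruct (encode (h i) _); discriminate.
Qed.

(** * A maximal coded chain *)

(* Bourbaki-Witt: the towers of an inflationary operator on sets are totally ordered. *)
Section Tower.
Variables (U : Type) (next : (U -> Prop) -> U -> Prop).
Hypothesis next_incl : forall A s, A s -> next A s.

Definition subset (A B : U -> Prop) : Prop := forall s, A s -> B s.

Lemma subset_antisym A B : subset A B -> subset B A -> A = B.
Proof.
  intros H1 H2. apply functional_extensionality. intros s.
  apply propositional_extensionality. split; auto.
Qed.

Inductive tower : (U -> Prop) -> Prop :=
| tower_step : forall A, tower A -> tower (next A)
| tower_sup : forall F : (U -> Prop) -> Prop,
    (forall A, F A -> tower A) -> tower (fun s => exists A, F A /\ A s).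

Definition extreme (C : U -> Prop) : Prop :=
  forall A, tower A -> subset A C -> subset C A \/ subset (next A) C.

Lemma extreme_compare C : extreme C -> forall A, tower A -> subset A C \/ subset (next C) A.
Proof.
  intros HC A HA. induction HA as [A HA IH|F HF IH].
  - destruct IH as [Hs|Hs].
    + destruct (HC A HA Hs) as [Hs'|Hs']; [|left; exact Hs'].
      right. rewrite (subset_antisym A C Hs Hs'). intros s; auto.
    + right. intros s Hs0. apply next_incl, Hs, Hs0.
  - destruct (classic (forall A, F A -> subset A C)) as [Hall|Hnot].
    + left. intros s [A [HA Hs]]. eapply Hall; eauto.
    + right. apply not_all_ex_not in Hnot as [A HA].
      apply imply_to_and in HA as [HA HnA].
      destruct (IH A HA) as [?|Hs]; [contradiction|].
      intros s Hs0. exists A. auto.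
Qed.

Lemma tower_extreme C : tower C -> extreme C.
Proof.
  induction 1 as [C HC IH|F HF IH]; intros A HA Hsub.
  - destruct (extreme_compare C IH A HA) as [Hs|Hs]; [|left; exact Hs].
    right. destruct (IH A HA Hs) as [Hs'|Hs'].
    + rewrite (subset_antisym A C Hs Hs'). intros s; auto.
    + intros s Hs0. apply next_incl, Hs', Hs0.
  - destruct (classic (forall D, F D -> subset (next D) A)) as [Hall|Hnot].
    + left. intros s [D [HD Hs]]. apply (Hall D HD), next_incl, Hs.
    + apply not_all_ex_not in Hnot as [D HD].
      apply imply_to_and in HD as [HD HnD].
      destruct (extreme_compare D (IH D HD) A HA) as [HAD|?]; [|contradiction].
      destruct (IH D HD A HA HAD) as [HDA|HnA].
      2: { right. intros s Hs0. exists D. auto. }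
      assert (A = D) by (apply subset_antisym; auto). subst D.
      destruct (classic (forall D', F D' -> subset D' A)) as [Hall'|Hnot'].
      * left. intros s [D' [HD' Hs]]. eapply Hall'; eauto.
      * right. apply not_all_ex_not in Hnot' as [D' HD'].
        apply imply_to_and in HD' as [HD' HnD'].
        destruct (extreme_compare A (IH A HD) D' (HF D' HD')) as [?|Hs]; [contradiction|].
        intros s Hs0. exists D'. auto.
Qed.

Lemma tower_total A C : tower A -> tower C -> subset A C \/ subset C A.
Proof.
  intros HA HC. destruct (extreme_compare C (tower_extreme C HC) A HA) as [?|Hs]; auto.
  right. intros s Hs0. apply Hs, next_incl, Hs0.
Qed.

Definition tower_top (s : U) : Prop := exists A, tower A /\ A s.

Lemma tower_top_tower : tower tower_top.
Proof. apply (tower_sup tower). auto. Qed.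

Lemma tower_top_next_fixed : subset (next tower_top) tower_top.
Proof.
  intros s Hs. exists (next tower_top). split; [apply tower_step, tower_top_tower|exact Hs].
Qed.

End Tower.

Arguments tower {U}.
Arguments tower_top {U}.

Definition coded_chain (A : linord -> Prop) : Prop :=
  (forall y x, A y -> A x -> init_seg y x \/ init_seg x y) /\
  (forall y x, A y -> A x -> encode y = encode x -> y = x).

Definition strict_bound (A : linord -> Prop) (z : linord) : Prop :=
  (forall y, A y -> init_seg y z) /\ (forall y, A y -> encode y <> encode z).

Definition coded_next (A : linord -> Prop) : linord -> Prop :=
  match excluded_middle_informative (exists z, strict_bound A z) with
  | left H => let z := proj1_sig (constructive_indefinite_description _ H) in fun s => A s \/ s = z
  | right _ => A
  end.

Lemma coded_next_incl A s : A s -> coded_next A s.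
Proof. intros Hs. unfold coded_next. destruct (excluded_middle_informative _); auto. Qed.

Lemma tower_coded_chain A : tower coded_next A -> coded_chain A.
Proof.
  induction 1 as [A HA IH|F HF IH].
  - unfold coded_next. destruct (excluded_middle_informative _) as [H|H]; auto.
    destruct (constructive_indefinite_description _ H) as [z [Hz1 Hz2]]. simpl.
    destruct IH as [G1 G2]. split.
    + intros y x [Hy| ->] [Hx| ->];
        [auto|left; auto|right; auto|left; apply init_seg_refl].
    + intros y x [Hy| ->] [Hx| ->] E;
        [auto|exfalso; apply (Hz2 y Hy E)|exfalso; apply (Hz2 x Hx); auto|reflexivity].
  - assert (Hboth : forall y x, (exists A, F A /\ A y) -> (exists A, F A /\ A x) ->
      exists A, F A /\ A y /\ A x).
    { intros y x [A1 [H1 Hy]] [A2 [H2 Hx]].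
      destruct (tower_total _ _ coded_next_incl A1 A2 (HF _ H1) (HF _ H2)) as [Hs|Hs];
        [exists A2|exists A1]; auto. }
    split; intros y x Hy Hx; destruct (Hboth y x Hy Hx) as [A [HA [Hy' Hx']]];
      apply (IH A HA); auto.
Qed.

Definition max_chain : linord -> Prop := tower_top coded_next.

Lemma max_chain_coded : coded_chain max_chain.
Proof. apply tower_coded_chain, tower_top_tower. Qed.

Lemma max_chain_no_strict_bound z : ~ strict_bound max_chain z.
Proof.
  intros Hz. pose proof (tower_top_next_fixed _ coded_next) as Hfix.
  fold max_chain in Hfix. unfold coded_next in Hfix.
  destruct (excluded_middle_informative (exists z, strict_bound max_chain z)) as [H|H];
    [|apply H; eauto].
  destruct (constructive_indefinite_description _ H) as [z' [_Hz Hz']]. simpl in Hfix.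
  apply (Hz' z'); [apply Hfix; right|]; reflexivity.
Qed.

Definition empty_order : linord :=
  Build_linord (fun _ => False) (fun _ _ => False) (fun a H => H) (fun a b c H _ => H)
    (fun a b H _ _ => False_ind _ H) (fun a => ex_intro _ a (conj (le_n a) (fun H => H))).

Lemma max_chain_inhabited : exists s, max_chain s.
Proof.
  apply NNPP. intros Hempty. apply (max_chain_no_strict_bound empty_order).
  split; intros y Hy; exfalso; eauto.
Qed.

(** * The uncountable covered set *)

Definition chain_codes (x : cantor) : Prop := exists s, max_chain s /\ encode s = x.

Lemma chain_codes_uncountable : ~ countable_set chain_codes.
Proof.
  intros [g Hg].
  destruct max_chain_coded as [Hchain Hcode_inj].
  destruct max_chain_inhabited as [s0 Hs0].
  set (P n s := max_chain s /\ (chain_codes (g n) -> encode s = g n)).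
  set (h n := epsilon (inhabits s0) (P n)).
  assert (Hh : forall n, P n (h n)).
  { intros n. apply epsilon_spec.
    destruct (classic (chain_codes (g n))) as [[s [Hs Es]]|Hn];
      [exists s|exists s0]; split; tauto. }
  assert (Henum : forall y, max_chain y -> exists n, h n = y).
  { intros y Hy. destruct (Hg (encode y)) as [n En]; [exists y; auto|].
    exists n. destruct (Hh n) as [Hhn Ehn].
    apply Hcode_inj; auto. rewrite Ehn, En; [reflexivity|]. rewrite En. exists y; auto. }
  destruct (chain_strict_upper_bound h) as [z [Hz_above Hz_new]].
  { intros i j. apply Hchain; apply Hh. }
  apply (max_chain_no_strict_bound z). split.
  - intros y Hy. destruct (Henum y Hy) as [n <-]. apply Hz_above.
  - intros y Hy. destruct (Henum y Hy) as [n <-]. intros E. apply (Hz_new n). auto.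
Qed.

Definition decoder_family (i : nat) : cantor -> cantor :=
  let (N, r) := Cantor.of_nat i in let (h, H) := Cantor.of_nat r in decoder N h H.

Lemma decoder_family_onto N h H : exists i, decoder_family i = decoder N h H.
Proof.
  exists (Cantor.to_nat (N, Cantor.to_nat (h, H))).
  unfold decoder_family. now rewrite !Cantor.cancel_of_to.
Qed.

Lemma chain_codes_covered :
  covered_by decoder_family (fun x y => chain_codes x /\ chain_codes y).
Proof.
  destruct max_chain_coded as [Hchain _].
  intros x y [[s [Hs <-]] [s' [Hs' <-]]].
  destruct (Hchain s s' Hs Hs') as [Hr|Hr];
    destruct (decoder_init_seg _ _ Hr) as [N [h [H E]]];
    destruct (decoder_family_onto N h H) as [i Ei]; exists i; rewrite Ei; auto.
Qed.

Theorem theorem3p1 :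
  exists (F : nat -> cantor -> cantor) (X : cantor -> Prop),
    (forall n, lipschitz1 (F n)) /\
    ~ countable_set X /\
    covered_by F (fun x y => X x /\ X y).
Proof.
  exists decoder_family, chain_codes. split; [|split].
  - intros i. unfold decoder_family.
    destruct (Cantor.of_nat i) as [N r], (Cantor.of_nat r) as [h H]. apply decoder_lipschitz.
  - apply chain_codes_uncountable.
  - apply chain_codes_covered.
Qed.
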